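(* Let $\overline{F}$ be a finite set, let $r=(r(i,j):i,j\in\overline{F})$ be an irreducible stochastic matrix (transition matrix of a homogeneous Markov chain $X$ on $\overline{F}$), and let $\boldsymbol{\alpha}=(\alpha_j:j\in\overline{F})\in[0,1]^{\overline{F}}$ be a non-zero vector of acceptance probabilities. Let $X^{(\boldsymbol{\alpha})}$ be the Markov chain obtained from $X$ by randomized skipping with acceptance probabilities $\boldsymbol{\alpha}$, with transition matrix $r^{(\boldsymbol{\alpha})}$, and let $B(\boldsymbol{\alpha})=\{j\in\overline{F}:\alpha_j=0\}$ (so $B(\boldsymbol{\alpha})\subsetneq\overline{F}$). Then \[ r^{(\boldsymbol{\alpha})}(i,j)=P\big(X^{(A)}(\tau^{(A)})=j\,\big|\,(X^{(A)}_0,Y^{(A)}_0)=(i,0)\big),\qquad i,j\in\overline{F}, \] the chain $X^{(\boldsymbol{\alpha})}$ is irreducible on $\overline{F}\setminus B(\boldsymbol{\alpha})$, and \[ r^{(\boldsymbol{\alpha})}=\sum_{k=0}^{\infty}\big(r I_{(1-\boldsymbol{\alpha})}\big)^{k} r I_{\boldsymbol{\alpha}}=\big(I-rI_{(1-\boldsymbol{\alpha})}\big)^{-1} r I_{\boldsymbol{\alpha}} . \]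
   Context: $I_{\boldsymbol{\alpha}}$ denotes the diagonal matrix indexed by $\overline{F}$ with diagonal entries $\alpha_j$, and $I_{(1-\boldsymbol{\alpha})}$ the diagonal matrix with diagonal entries $1-\alpha_j$; $I$ is the identity matrix. Randomized skipping: a random walker at state $i$ proposes a destination $j$ with probability $r(i,j)$; independently of the past given $j$, a Bernoulli experiment with success probability $\alpha_j$ is performed. On success the jump to $j$ is performed and the walker stays at $j$ for (at least) one time step. On failure the walker performs only an imaginary jump to $j$, spending no time there, and immediately proposes a new destination $l$ with probability $r(j,l)$, which is again accepted with probability $\alpha_l$, and so on, until some proposal is accepted; the accepted state is the next state of $X^{(\boldsymbol{\alpha})}$. The auxiliary chain $(X^{(A)},Y^{(A)})$ is the Markov chain on $\overline{F}\times\{0,1\}$ with transition probabilities $P(X^{(A)}_{n+1}=j,Y^{(A)}_{n+1}=1\mid X^{(A)}_n=i,Y^{(A)}_n=0)=r(i,j)\alpha_j$, $P(X^{(A)}_{n+1}=j,Y^{(A)}_{n+1}=0\mid X^{(A)}_n=i,Y^{(A)}_n=0)=r(i,j)(1-\alpha_j)$, and with all states in $\overline{F}\times\{1\}$ absorbing (transition probability $\delta_{ij}$ from $(i,1)$ to $(j,1)$, and $0$ to $(j,0)$); it is started in $\overline{F}\times\{0\}$. $\tau^{(A)}=\inf\{n\ge 1: Y^{(A)}_n=1\}$ is its absorption time. *)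

From mathcomp Require Import all_boot all_order all_algebra.
From mathcomp Require Import all_classical all_reals all_analysis.
Set Implicit Arguments. Unset Strict Implicit. Unset Printing Implicit Defensive.
Import Order.TTheory GRing.Theory Num.Theory numFieldNormedType.Exports.
Local Open Scope ring_scope.

(* The finite state space \overline{F} is 'I_n.+1 (it is nonempty since
   alpha is non-zero). Transition matrices are 'M[R]_n.+1. *)

Section Defs.
Variables (R : realType) (n : nat).
Notation S := 'I_n.+1.

Definition stochastic (r : 'M[R]_n.+1) : Prop :=
  (forall i j, 0 <= r i j) /\ (forall i, \sum_j r i j = 1).

Definition irreducible_on (A : {set S}) (P : 'M[R]_n.+1) : Prop :=
  forall i j, i \in A -> j \in A -> exists k : nat, 0 < (P ^+ k) i j.

Definition irreducible (P : 'M[R]_n.+1) : Prop := irreducible_on [set: S] P.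

Definition Ialpha (alpha : S -> R) : 'M[R]_n.+1 := diag_mx (\row_j alpha j).
Definition I1malpha (alpha : S -> R) : 'M[R]_n.+1 := diag_mx (\row_j (1 - alpha j)).

Definition Bset (alpha : S -> R) : {set S} := [set j | alpha j == 0].

(* A run of the procedure from i that accepts after k rejected proposals
   p 0, ..., p (k-1) and then accepts the proposal j.  The m-th visited
   (proposed) point is [pnode i p m] (with pnode i p 0 = i). *)
Definition pnode (i : S) (k : nat) (p : {ffun 'I_k -> S}) (m : nat) : S :=
  if m is m'.+1 then odflt i (omap p (insub m')) else i.

Definition skip_w (r : 'M[R]_n.+1) (alpha : S -> R) (k : nat) (i j : S) : R :=
  \sum_(p : {ffun 'I_k -> S})
     ((\prod_(m < k) (r (pnode i p m) (p m) * (1 - alpha (p m))))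
      * (r (pnode i p k) j * alpha j)).

Definition rskip (r : 'M[R]_n.+1) (alpha : S -> R) : 'M[R]_n.+1 :=
  \matrix_(i, j) limn (fun N => \sum_(k < N) skip_w r alpha k i j).

(* ---- The auxiliary chain (X^(A), Y^(A)) on S * bool (Y = 1 <-> true) ---- *)
Definition aux_P (r : 'M[R]_n.+1) (alpha : S -> R) (x y : S * bool) : R :=
  if x.2 then (x == y)%:R
  else if y.2 then r x.1 y.1 * alpha y.1 else r x.1 y.1 * (1 - alpha y.1).

Fixpoint aux_dist (r : 'M[R]_n.+1) (alpha : S -> R) (m : nat) (x0 y : S * bool) : R :=
  if m is m'.+1 then \sum_(x : S * bool) aux_dist r alpha m' x0 x * aux_P r alpha x y
  else (x0 == y)%:R.

(* P(X^(A)(tau^(A)) = j, tau^(A) < oo | (X_0,Y_0) = (i,0)):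
   since the states (.,1) are absorbing and Y_0 = 0,
   P(X_m = j, Y_m = 1) = P(tau <= m, X_tau = j), so this is the limit in m. *)
Definition aux_exit (r : 'M[R]_n.+1) (alpha : S -> R) (i j : S) : R :=
  limn (fun m => aux_dist r alpha m (i, false) (j, true)).

End Defs.

From mathcomp Require Import all_boot all_order all_algebra.
From mathcomp Require Import all_classical all_reals all_analysis.
Import Order.TTheory GRing.Theory Num.Theory numFieldNormedType.Exports.
Local Open Scope classical_set_scope.
Local Open Scope ring_scope.

(* Write Q = r I_(1-alpha) for rejected proposals and A = r I_alpha for accepted
   ones.  Summing the skipping procedure over the number k of rejections gives
   r^(alpha) = sum_k Q^k A, and the auxiliary chain started in F x {0} has the
   same exit probabilities after m steps.  Q is substochastic, and since r is
   irreducible and some alpha_j > 0, a power Q^K loses a fixed fraction of the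
   mass of every row; so the partial sums of the Neumann series sum_k Q^k are
   bounded, the series converges, and its limit inverts I - Q.  Finally
   r^(alpha) solves the first-step equation M = A + Q M: along an r-path to an
   accepted state, rejected intermediate states are passed over by M while
   accepted ones become steps of M, which gives irreducibility off B(alpha). *)

Lemma cvg_sum_fin (R : realType) (I : finType) (f : I -> nat -> R) (a : I -> R) :
  (forall i, f i N @[N --> \oo] --> a i) -> \sum_i f i N @[N --> \oo] --> \sum_i a i.
Proof. by move=> cvf; apply: cvg_big => //; exact: add_continuous. Qed.

Section RowSums.
Context {R : realType} {n : nat}.
Implicit Types (A B : 'M[R]_n.+1).

Definition rowsum A i : R := \sum_j A i j.

Definition contracting A : Prop := exists K (d : R), d < 1 /\ forall i, rowsum (A ^+ K) i <= d.

Lemma rowsum_mul A B i : rowsum (A *m B) i = \sum_l A i l * rowsum B l.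
Proof.
rewrite /rowsum; under eq_bigr do rewrite mxE.
by rewrite exchange_big; apply: eq_bigr => l _; rewrite mulr_sumr.
Qed.

Lemma rowsum1 i : rowsum 1%:M i = 1.
Proof.
rewrite /rowsum (bigD1 i) //= mxE eqxx big1 ?addr0 // => j /negbTE ji.
by rewrite mxE eq_sym ji.
Qed.

End RowSums.

Lemma mulmx_gt0_witness (R : realType) (n : nat) (B C : 'M[R]_n.+1) i j :
  (forall i l, 0 <= B i l) -> (forall l j, 0 <= C l j) ->
  0 < (B *m C) i j -> exists l, 0 < B i l /\ 0 < C l j.
Proof.
move=> B_ge0 C_ge0; rewrite mxE => /gt_eqF/negbT/eqP.
case/psumr_neq0P => [l _|l /andP[_]]; first exact: mulr_ge0.
by rewrite mulr_ge0_gt0 // => /andP[Bil Clj]; exists l.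
Qed.

Section Substochastic.
Context {R : realType} {n : nat}.
Variable A : 'M[R]_n.+1.
Hypothesis A_ge0 : forall i j, 0 <= A i j.

Lemma exprmx_ge0 k i j : 0 <= (A ^+ k) i j.
Proof.
elim: k i j => [|k IH] i j; first by rewrite expr0 mxE ler0n.
by rewrite exprS -mulmxE mxE; apply: sumr_ge0 => l _; exact: mulr_ge0.
Qed.

Lemma rowsum_expr_ge0 k i : 0 <= rowsum (A ^+ k) i.
Proof. by apply: sumr_ge0 => j _; exact: exprmx_ge0. Qed.

Hypothesis A_rowsum_le1 : forall i, rowsum A i <= 1.

Lemma rowsum_expr_nonincr k p i : (k <= p)%N -> rowsum (A ^+ p) i <= rowsum (A ^+ k) i.
Proof.
move=> /subnKC <-; elim: (p - k)%N => [|d IH]; first by rewrite addn0.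
apply: le_trans IH; rewrite addnS exprSr -mulmxE rowsum_mul.
apply: ler_sum => l _; rewrite -[leRHS]mulr1.
by apply: ler_wpM2l => //; exact: exprmx_ge0.
Qed.

Lemma rowsum_expr_le1 k i : rowsum (A ^+ k) i <= 1.
Proof. by have := rowsum_expr_nonincr 0 k i (leq0n k); rewrite expr0 rowsum1. Qed.

Definition neumann : 'M[R]_n.+1 := \matrix_(i, j) limn (fun N => (\sum_(k < N) A ^+ k) i j).

Section Contraction.
Variables (K : nat) (d : R).
Hypotheses (d_lt1 : d < 1) (rowsum_K : forall i, rowsum (A ^+ K) i <= d).

Lemma partial_rowsum_bounded N i : \sum_(k < N) rowsum (A ^+ k) i <= K%:R / (1 - d).
Proof.
set T := \sum_(k < N) rowsum (A ^+ k) i.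
suff T_le : T <= K%:R + d * T.
  by rewrite ler_pdivlMr ?subr_gt0 // mulrBr mulr1 lerBlDr mulrC.
apply: (@le_trans _ _ (\sum_(k < K + N) rowsum (A ^+ k) i)).
  rewrite addnC big_split_ord /= lerDl; apply: sumr_ge0 => k _; exact: rowsum_expr_ge0.
rewrite big_split_ord /=; apply: lerD.
  apply: (@le_trans _ _ (\sum_(k < K) (1 : R))); last by rewrite sumr_const card_ord.
  by apply: ler_sum => k _; exact: rowsum_expr_le1.
rewrite /T mulr_sumr; apply: ler_sum => k _.
rewrite addnC exprD -mulmxE rowsum_mul /rowsum mulr_sumr.
apply: ler_sum => l _.
by rewrite mulrC; apply: ler_wpM2r; [exact: exprmx_ge0 | exact: rowsum_K].
Qed.

End Contraction.

Hypothesis A_contracting : contracting A.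

Lemma cvg_neumann i j : (\sum_(k < N) A ^+ k) i j @[N --> \oo] --> neumann i j.
Proof.
have [K [d [d_lt1 rowsum_K]]] := A_contracting.
rewrite mxE; apply: nondecreasing_is_cvgn.
  move=> N M NM; rewrite !summxE -(subnKC NM) big_split_ord /= lerDl.
  by apply: sumr_ge0 => k _; exact: exprmx_ge0.
exists (K%:R / (1 - d)) => _ [N _ <-].
rewrite summxE; apply: le_trans (partial_rowsum_bounded _ _ d_lt1 rowsum_K N i).
apply: ler_sum => k _; rewrite /rowsum (bigD1 j) //= lerDl.
by apply: sumr_ge0 => x _; exact: exprmx_ge0.
Qed.

Lemma cvg_neumann_mulmx (B : 'M[R]_n.+1) i j :
  ((\sum_(k < N) A ^+ k) *m B) i j @[N --> \oo] --> (neumann *m B) i j.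
Proof.
under eq_cvg do rewrite mxE.
by rewrite mxE; apply: cvg_sum_fin => x; apply: cvgMr_tmp; exact: cvg_neumann.
Qed.

Lemma neumann_ge0 i j : 0 <= neumann i j.
Proof.
rewrite -(cvg_lim _ (cvg_neumann i j)) //.
apply: limr_ge; first by apply/cvg_ex; eexists; exact: cvg_neumann.
by apply: nearW => N; rewrite summxE; apply: sumr_ge0 => k _; exact: exprmx_ge0.
Qed.

Lemma neumann_fixpoint : neumann = 1%:M + A *m neumann.
Proof.
apply/matrixP => i j.
have shifted : (\sum_(k < N.+1) A ^+ k) i j @[N --> \oo] --> neumann i j.
  by rewrite (cvg_shiftS (fun N => (\sum_(k < N) A ^+ k) i j)); exact: cvg_neumann.
suff: (fun N => (\sum_(k < N.+1) A ^+ k) i j) @ \oo --> (1%:M + A *m neumann) i j.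
  exact: cvg_unique shifted.
have -> : (fun N => (\sum_(k < N.+1) A ^+ k) i j) =
          (fun N => (1%:M : 'M[R]_n.+1) i j + (A *m \sum_(k < N) A ^+ k) i j).
  apply: funext => N; rewrite big_ord_recl expr0 mulmx_sumr !mxE; congr (_ + _).
  by rewrite summxE summxE; apply: eq_bigr => k _; rewrite exprS mulmxE.
rewrite [X in _ --> X]mxE; apply: cvgD; first exact: cvg_cst.
under eq_cvg do rewrite mxE.
by rewrite mxE; apply: cvg_sum_fin => x; apply: cvgMl_tmp; exact: cvg_neumann.
Qed.

Lemma mulmx_1B_neumann : (1%:M - A) *m neumann = 1%:M.
Proof. by rewrite mulmxBl mul1mx {1}neumann_fixpoint addrK. Qed.

Lemma unitmx_1B : (1%:M - A) \in unitmx.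
Proof. exact: (mulmx1_unit mulmx_1B_neumann).1. Qed.

Lemma invmx_1B : invmx (1%:M - A) = neumann.
Proof.
have := congr1 (mulmx (invmx (1%:M - A))) mulmx_1B_neumann.
by rewrite mulmxA mulVmx ?unitmx_1B // mul1mx mulmx1 => <-.
Qed.

End Substochastic.

Definition fcons {T : Type} {k : nat} (x : T) (p : {ffun 'I_k -> T}) : {ffun 'I_k.+1 -> T} :=
  [ffun m : 'I_k.+1 => if unlift ord0 m is Some m' then p m' else x].

Lemma fcons0 (T : Type) k (x : T) (p : {ffun 'I_k -> T}) : fcons x p ord0 = x.
Proof. by rewrite /fcons ffunE unlift_none. Qed.

Lemma fconsS (T : Type) k (x : T) (p : {ffun 'I_k -> T}) m : fcons x p (lift ord0 m) = p m.
Proof. by rewrite /fcons ffunE liftK. Qed.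

Lemma big_ffun_fcons (R : nmodType) (S : finType) k (G : {ffun 'I_k.+1 -> S} -> R) :
  \sum_p G p = \sum_x \sum_(p : {ffun 'I_k -> S}) G (fcons x p).
Proof.
rewrite pair_big /=.
pose g (q : {ffun 'I_k.+1 -> S}) := (q ord0, [ffun m => q (lift ord0 m)]).
pose h (xp : S * {ffun 'I_k -> S}) := fcons xp.1 xp.2.
have hK : cancel h g.
  by move=> [x p]; rewrite /h /g /= fcons0; congr (_, _); apply/ffunP => m; rewrite ffunE fconsS.
have gK : cancel g h.
  move=> p; apply/ffunP => m; rewrite /h /g /= /fcons ffunE.
  by case: unliftP => [m' ->|->]; rewrite ?ffunE.
by rewrite (reindex h) //; exact: onW_bij (Bijective hK gK).
Qed.

Lemma pnode_fcons (n : nat) k (i x : 'I_n.+1) (p : {ffun 'I_k -> 'I_n.+1}) m :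
  (m <= k)%N -> pnode i (fcons x p) m.+1 = pnode x p m.
Proof.
move=> mk; rewrite /pnode.
case: insubP => [u _ vu|]; last by rewrite ltnS mk.
case: m mk vu => [|m] mk vu /=.
  by rewrite (_ : u = ord0); [exact: fcons0 | exact: val_inj].
case: insubP => [w _ vw|]; last by rewrite mk.
by rewrite (_ : u = lift ord0 w) ?fconsS //; apply: val_inj; rewrite /= vu /bump /= vw.
Qed.

Lemma big_pair_bool (R : nmodType) (S : finType) (G : S * bool -> R) :
  \sum_x G x = \sum_s (G (s, false) + G (s, true)).
Proof.
rewrite (eq_bigr (fun p => G (p.1, p.2))); last by case.
by rewrite -(pair_bigA _ (fun s b => G (s, b))) /=; apply: eq_bigr => s _; rewrite big_bool addrC.
Qed.

Section RandomizedSkipping.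
Context {R : realType} {n : nat}.
Variables (r : 'M[R]_n.+1) (alpha : 'I_n.+1 -> R).
Local Notation Q := (r *m I1malpha alpha).
Local Notation Acc := (r *m Ialpha alpha).

Lemma mulmx_I1malphaE i j : Q i j = r i j * (1 - alpha j).
Proof. by rewrite /I1malpha mul_mx_diag !mxE. Qed.

Lemma mulmx_IalphaE i j : Acc i j = r i j * alpha j.
Proof. by rewrite /Ialpha mul_mx_diag !mxE. Qed.

Lemma skip_wE k i j : skip_w r alpha k i j = (Q ^+ k *m Acc) i j.
Proof.
elim: k i => [|k IH] i.
  rewrite /skip_w expr0 mul1mx mulmx_IalphaE.
  under eq_bigr do rewrite big_ord0 mul1r /=.
  by rewrite sumr_const card_ffun !card_ord expn0.
rewrite /skip_w big_ffun_fcons exprS -mulmxE -mulmxA mxE.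
apply: eq_bigr => x _.
rewrite -IH /skip_w mulr_sumr; apply: eq_bigr => p _.
rewrite big_ord_recl fcons0 -mulmx_I1malphaE -!mulrA; congr (_ * _).
rewrite pnode_fcons //; congr (_ * _).
apply: eq_bigr => m _.
by rewrite lift0 pnode_fcons ?fconsS // ltnW.
Qed.

Lemma aux_distE m i :
  (forall x, aux_dist r alpha m (i, false) (x, false) = (Q ^+ m) i x) /\
  (forall j, aux_dist r alpha m (i, false) (j, true) = (\sum_(k < m) Q ^+ k *m Acc) i j).
Proof.
elim: m => [|m [IH1 IH2]].
  split=> x /=; last by rewrite summxE big_ord0 xpair_eqE andbF.
  by rewrite expr0 [_ i x]mxE xpair_eqE andbT.
split=> x /=; rewrite big_pair_bool /aux_P /=.
  rewrite exprSr -mulmxE mxE; apply: eq_bigr => s _.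
  by rewrite IH1 mulmx_I1malphaE xpair_eqE andbF mulr0 addr0.
rewrite [RHS]summxE [RHS]big_ord_recr /= big_split /= addrC; congr (_ + _).
  rewrite (bigD1 x) //= xpair_eqE eqxx andbT mulr1 big1 ?addr0; first by rewrite IH2 summxE.
  by move=> s sx; rewrite xpair_eqE andbT (negbTE sx) mulr0.
by rewrite mxE; apply: eq_bigr => s _; rewrite IH1 mulmx_IalphaE.
Qed.

Lemma partial_skip_wE N i j :
  \sum_(k < N) skip_w r alpha k i j = ((\sum_(k < N) Q ^+ k) *m Acc) i j.
Proof. by rewrite mulmx_suml summxE; apply: eq_bigr => k _; exact: skip_wE. Qed.

Lemma rskip_aux_exit i j : rskip r alpha i j = aux_exit r alpha i j.
Proof.
rewrite /rskip /aux_exit mxE; congr (limn _); apply: funext => N.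
by rewrite partial_skip_wE (aux_distE N i).2 mulmx_suml.
Qed.

Hypotheses (r_stoch : stochastic r) (alpha01 : forall j, 0 <= alpha j <= 1).

Lemma r_ge0 i j : 0 <= r i j.
Proof. by case: r_stoch. Qed.

Lemma Q_ge0 i j : 0 <= Q i j.
Proof. by rewrite mulmx_I1malphaE mulr_ge0 ?r_ge0 // subr_ge0; case/andP: (alpha01 j). Qed.

Lemma Acc_ge0 i j : 0 <= Acc i j.
Proof. by rewrite mulmx_IalphaE mulr_ge0 ?r_ge0 //; case/andP: (alpha01 j). Qed.

Lemma rowsum_Q_le1 i : rowsum Q i <= 1.
Proof.
case: r_stoch => _ /(_ i) <-; apply: ler_sum => j _; rewrite mulmx_I1malphaE ler_piMr ?r_ge0 //.
by rewrite lerBlDr lerDl; case/andP: (alpha01 j).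
Qed.

Lemma sum_Q_mul_lt1 (c : 'I_n.+1 -> R) i l :
  (forall x, 0 <= c x <= 1) -> 0 < r i l -> (1 - alpha l) * c l < 1 ->
  \sum_x Q i x * c x < 1.
Proof.
move=> c01 ril cl_lt1; case: r_stoch => _ /(_ i) <-.
rewrite (bigD1 l) //= [ltRHS](bigD1 l) //=; apply: ltr_leD.
  by rewrite mulmx_I1malphaE -mulrA -[ltRHS]mulr1 ltr_pM2l.
apply: ler_sum => x _; rewrite mulmx_I1malphaE -mulrA ler_piMr ?r_ge0 //.
have /andP [ax0 ax1] := alpha01 x; have /andP [cx0 cx1] := c01 x.
by rewrite mulr_ile1 ?subr_ge0 // lerBlDr lerDl.
Qed.

Lemma rowsum_Q_expr_lt1 j0 k i :
  0 < alpha j0 -> 0 < (r ^+ k.+1) i j0 -> rowsum (Q ^+ k.+1) i < 1.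
Proof.
move=> alpha_j0; have rowsum01 m x : 0 <= rowsum (Q ^+ m) x <= 1.
  by rewrite (rowsum_expr_ge0 _ Q_ge0) (rowsum_expr_le1 _ Q_ge0 rowsum_Q_le1).
elim: k i => [|k IH] i.
  rewrite expr1 exprS -mulmxE rowsum_mul => rij0; apply: (sum_Q_mul_lt1 _ _ j0) => //.
  by rewrite expr0 rowsum1 mulr1 ltrBlDr ltrDl.
rewrite exprS -mulmxE => /mulmx_gt0_witness [||l [ril rlj0]].
- exact: r_ge0.
- exact: (exprmx_ge0 _ r_ge0).
rewrite exprS -mulmxE rowsum_mul; apply: (sum_Q_mul_lt1 _ _ l) => //.
apply: le_lt_trans (IH l rlj0).
have /andP [al0 _] := alpha01 l; have /andP [c0 _] := rowsum01 k.+1 l.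
by rewrite ler_piMl // lerBlDr lerDl.
Qed.

Section FirstStepSolution.
Variable M : 'M[R]_n.+1.
Hypotheses (M_ge0 : forall i j, 0 <= M i j) (M_first_step : M = Acc + Q *m M).

Lemma first_step_accept a x : r a x * alpha x <= M a x.
Proof.
have -> : M a x = (Acc + Q *m M) a x by rewrite -M_first_step.
rewrite mxE mulmx_IalphaE lerDl mxE.
by apply: sumr_ge0 => l _; apply: mulr_ge0; [exact: Q_ge0 | exact: M_ge0].
Qed.

Lemma first_step_reject a l x : r a l * (1 - alpha l) * M l x <= M a x.
Proof.
have -> : M a x = (Acc + Q *m M) a x by rewrite -M_first_step.
rewrite mxE ler_wpDl ?Acc_ge0 // mxE (bigD1 l) //= mulmx_I1malphaE lerDl.
by apply: sumr_ge0 => y _; apply: mulr_ge0; [exact: Q_ge0 | exact: M_ge0].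
Qed.

Lemma first_step_path m a b :
  0 < alpha b -> 0 < (r ^+ m.+1) a b -> exists s, 0 < (M ^+ s.+1) a b.
Proof.
move=> alpha_b; elim: m a => [|m IH] a.
  rewrite expr1 => rab; exists 0%N; rewrite expr1.
  exact: lt_le_trans (mulr_gt0 rab alpha_b) (first_step_accept a b).
rewrite exprS -mulmxE => /mulmx_gt0_witness [||l [ral rlb]].
- exact: r_ge0.
- exact: (exprmx_ge0 _ r_ge0).
have [s Mlb] := IH l rlb.
have Mpow_ge0 := exprmx_ge0 _ M_ge0.
have [alpha_l0|alpha_l_neq0] := eqVneq (alpha l) 0.
  (* [l] is always rejected, so [M a] dominates [r a l * M l]. *)
  exists s; apply: lt_le_trans (mulr_gt0 ral Mlb) _.
  rewrite !exprS -!mulmxE !mxE mulr_sumr; apply: ler_sum => x _.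
  rewrite mulrA ler_wpM2r //.
  by have := first_step_reject a l x; rewrite alpha_l0 subr0 mulr1.
exists s.+1; rewrite exprS -mulmxE mxE (bigD1 l) //=.
apply: lt_le_trans (_ : M a l * (M ^+ s.+1) l b <= _); last first.
  by rewrite lerDl; apply: sumr_ge0 => x _; apply: mulr_ge0.
apply: mulr_gt0 Mlb; apply: lt_le_trans (first_step_accept a l).
by rewrite mulr_gt0 // lt_def alpha_l_neq0; case/andP: (alpha01 l).
Qed.

Lemma irreducible_on_first_step : irreducible r -> irreducible_on (~: Bset alpha) M.
Proof.
move=> r_irr a b; rewrite !inE => _ alpha_b.
have [[|m] rab] : exists k, 0 < (r ^+ k) a b by apply: r_irr; rewrite inE.
  by exists 0%N; move: rab; rewrite !expr0.
have [|s Mab] := first_step_path m a b _ rab; last by exists s.+1.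
by rewrite lt_def alpha_b; case/andP: (alpha01 b).
Qed.

End FirstStepSolution.

Section Irreducible.
Hypotheses (r_irr : irreducible r) (alpha_neq0 : exists j, alpha j != 0).

Lemma Q_contracting : contracting Q.
Proof.
have [j0 alpha_j0] := alpha_neq0.
have {}alpha_j0 : 0 < alpha j0 by rewrite lt_def alpha_j0; case/andP: (alpha01 j0).
have leaks i : exists k, rowsum (Q ^+ k.+1) i < 1.
  have [l /andP [_ ril]] : exists l, true && (0 < r i l).
    apply: psumr_neq0P => [l _|]; first exact: r_ge0.
    by case: r_stoch => _ ->; apply/eqP; rewrite oner_eq0.
  have [k rlj0] : exists k, 0 < (r ^+ k) l j0 by apply: r_irr; rewrite inE.
  exists k; apply: (rowsum_Q_expr_lt1 j0) => //.
  rewrite exprS -mulmxE mxE (bigD1 l) //=.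
  apply: lt_le_trans (mulr_gt0 ril rlj0) _; rewrite lerDl.
  by apply: sumr_ge0 => x _; apply: mulr_ge0; [exact: r_ge0 | exact: (exprmx_ge0 _ r_ge0)].
have [f f_leaks] := choice leaks.
pose K := (\max_i f i).+1.
have rowsum_K i : rowsum (Q ^+ K) i < 1.
  apply: le_lt_trans (f_leaks i); apply: (rowsum_expr_nonincr _ Q_ge0 rowsum_Q_le1).
  by rewrite ltnS leq_bigmax.
exists K, (\big[Order.max/0]_i rowsum (Q ^+ K) i); split.
  by apply: bigmax_lt => //; exact: ltr01.
by move=> i; exact: le_bigmax.
Qed.

Lemma rskip_neumann : rskip r alpha = neumann Q *m Acc.
Proof.
apply/matrixP => i j; rewrite mxE.
under eq_fun do rewrite partial_skip_wE.
exact: cvg_lim (cvg_neumann_mulmx _ Q_ge0 rowsum_Q_le1 Q_contracting Acc i j).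
Qed.

Lemma cvg_rskip i j :
  (fun N => (\sum_(k < N) (Q ^+ k *m r *m Ialpha alpha)) i j) @ \oo --> rskip r alpha i j.
Proof.
rewrite rskip_neumann.
have -> : (fun N => (\sum_(k < N) (Q ^+ k *m r *m Ialpha alpha)) i j) =
          (fun N => ((\sum_(k < N) Q ^+ k) *m Acc) i j).
  by apply: funext => N; rewrite mulmx_suml !summxE; apply: eq_bigr => k _; rewrite mulmxA.
exact: (cvg_neumann_mulmx _ Q_ge0 rowsum_Q_le1 Q_contracting).
Qed.

Lemma rskip_first_step : rskip r alpha = Acc + Q *m rskip r alpha.
Proof.
rewrite rskip_neumann [in LHS](neumann_fixpoint _ Q_ge0 rowsum_Q_le1 Q_contracting).
by rewrite mulmxDl mul1mx -mulmxA.
Qed.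

Lemma rskip_ge0 i j : 0 <= rskip r alpha i j.
Proof.
rewrite rskip_neumann mxE; apply: sumr_ge0 => x _; apply: mulr_ge0; last exact: Acc_ge0.
exact: (neumann_ge0 _ Q_ge0 rowsum_Q_le1 Q_contracting).
Qed.

End Irreducible.
End RandomizedSkipping.

Theorem theorem2p2 (R : realType) (n : nat) (r : 'M[R]_n.+1) (alpha : 'I_n.+1 -> R) :
  stochastic r -> irreducible r ->
  (forall j, 0 <= alpha j <= 1) -> (exists j, alpha j != 0) ->
  [/\ (forall i j, rskip r alpha i j = aux_exit r alpha i j),
      irreducible_on (~: Bset alpha) (rskip r alpha),
      (forall i j,
         (fun N => (\sum_(k < N) ((r *m I1malpha alpha) ^+ k *m r *m Ialpha alpha)) i j)
           @ \oo --> rskip r alpha i j),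
      (1%:M - r *m I1malpha alpha) \in unitmx &
      rskip r alpha = invmx (1%:M - r *m I1malpha alpha) *m r *m Ialpha alpha].
Proof.
move=> r_stoch r_irr alpha01 alpha_neq0.
have Q_ge0 := Q_ge0 r alpha r_stoch alpha01.
have Q_le1 := rowsum_Q_le1 r alpha r_stoch alpha01.
have Q_contr := Q_contracting r alpha r_stoch alpha01 r_irr alpha_neq0.
have rskip_ge0 := rskip_ge0 r alpha r_stoch alpha01 r_irr alpha_neq0.
have rskip_first_step := rskip_first_step r alpha r_stoch alpha01 r_irr alpha_neq0.
split.
- exact: rskip_aux_exit.
- exact: irreducible_on_first_step r_stoch alpha01 _ rskip_ge0 rskip_first_step r_irr.
- exact: cvg_rskip.
- exact: unitmx_1B Q_ge0 Q_le1 Q_contr.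
- by rewrite rskip_neumann // (invmx_1B _ Q_ge0 Q_le1 Q_contr) mulmxA.
Qed.
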